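(* Let $V$ be a real vector space of odd finite dimension and $G\le\mathrm{GL}(V)$ a finite group. Let $S\le V$ be an irreducible $\mathbb{R}G$-submodule such that $V$ is $S$-homogeneous (i.e. $V$ is a direct sum of $\mathbb{R}G$-modules isomorphic to $S$), and suppose that the pair $(G,S)$ has the $E1$-property. Then the pair $(G,V)$ has the $E1$-property.
   Context: For a finite group $G$, a finite-dimensional $\mathbb{R}G$-module $V$ with representation $\rho\colon G\to\mathrm{GL}(V)$, and $n\in\mathrm{GL}(V)$ of finite order normalizing $\rho(G)$, the triple $(G,V,n)$ has the $E1$-property if there is $g\in G$ such that $\rho(g)n$ has eigenvalue $1$. The pair $(G,V)$ has the $E1$-property if $(G,V,n')$ has the $E1$-property for every $n'\in\mathrm{GL}(V)$ of finite order normalizing $\rho(G)$. *)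

From HB Require Import structures.
From mathcomp Require Import all_boot all_order all_algebra all_fingroup all_character.
From mathcomp Require Import reals.
Set Implicit Arguments. Unset Strict Implicit. Unset Printing Implicit Defensive.
Import GRing.Theory Num.Theory.
Local Open Scope ring_scope.

Section E1.
Variables (R : realType) (gT : finGroupType) (G : {group gT}) (m : nat).
Variable rG : mx_representation R G m.

(* k-th power of a square matrix (works for any size m, including the
   possibly non-".+1" size \rank S). *)
Definition mxpow (N : 'M[R]_m) (k : nat) : 'M[R]_m := iter k (mulmx N) 1%:M.

Definition finite_order_GL (N : 'M[R]_m) : Prop :=
  N \in unitmx /\ exists2 k : nat, (0 < k)%N & mxpow N k = 1%:M.

Definition normalizes_rep (N : 'M[R]_m) : Prop :=
  (forall g, g \in G -> exists2 h, h \in G & N *m rG g *m invmx N = rG h) /\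
  (forall h, h \in G -> exists2 g, g \in G & N *m rG g *m invmx N = rG h).

Definition E1_triple (N : 'M[R]_m) : Prop :=
  exists2 g, g \in G & eigenvalue (rG g *m N) 1.

Definition E1_pair : Prop :=
  forall N : 'M[R]_m, finite_order_GL N -> normalizes_rep N -> E1_triple N.

Definition homogeneous_mx (S : 'M[R]_m) : Prop :=
  exists k : nat, exists W : 'I_k -> 'M[R]_m,
    [/\ forall i, mx_iso rG S (W i),
        mxdirect (\sum_i W i) &
        (\sum_i W i == 1%:M)%MS].
End E1.

(* Since odd n = k * dim S, both the multiplicity k of S in V and dim S are odd.
   The E_i embed S into V as the homogeneous components, identifying V with
   R^k (x) S.  As dim S is odd, every G-endomorphism of S has a real eigenvalue,
   hence End_G(S) = R; together with a twisted Schur lemma this factors any N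
   normalising G as N = B (x) M, with M normalising G on S.  If N^j = 1, then
   B^j = c and c M^j = 1; a real eigenvalue lam of B (k is odd) has lam^j = c, so
   lam M has finite order and normalises G on S.  The E1-property of S gives g
   and v with v rS(g) (lam M) = v, and then w (x) v, for w a lam-eigenvector of B,
   is fixed by rG(g) N. *)

From HB Require Import structures.
From mathcomp Require Import all_boot all_order all_algebra all_fingroup all_character.
From mathcomp Require Import reals polyrcf.
Import GRing.Theory Num.Theory.
Local Open Scope ring_scope.
Set Implicit Arguments. Unset Strict Implicit. Unset Printing Implicit Defensive.

Lemma odd_eigenvalue (R : rcfType) m (A : 'M[R]_m) : odd m -> exists a, eigenvalue A a.
Proof.
move=> odd_m; have [|a ra] := @odd_poly_root R (char_poly A).
  by rewrite size_char_poly /= negbK.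
by exists a; rewrite eigenvalue_root_char.
Qed.

Lemma mxpowZ (R : realType) m (a : R) (A : 'M[R]_m) t :
  mxpow (a *: A) t = a ^+ t *: mxpow A t.
Proof.
elim: t => [|t IHt]; first by rewrite /= expr0 scale1r.
by rewrite /= IHt -scalemxAl -scalemxAr scalerA exprS.
Qed.

Lemma mxpow_unit (R : realType) m (A : 'M[R]_m) j :
  (0 < j)%N -> mxpow A j = 1%:M -> A \in unitmx.
Proof. by case: j => // j _ /mulmx1_unit[]. Qed.

Lemma mulmx_conjV (R : comUnitRingType) m (A B C : 'M[R]_m) :
  A \in unitmx -> A *m B = C *m A -> invmx A *m C = B *m invmx A.
Proof.
move=> uA eA; rewrite -[invmx A *m C](mulmxK uA) -(mulmxA (invmx A) C A) -eA mulmxA.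
by rewrite mulVmx // mul1mx.
Qed.

Section TwistedSchur.
Variables (F : fieldType) (gT : finGroupType) (G : {group gT}) (d : nat).
Variable rS : mx_representation F G d.
Hypothesis irrS : mx_irreducible rS.

Definition twisted_hom (Y : 'M[F]_d) : Prop :=
  forall h, h \in G -> exists2 g, g \in G & Y *m rS g = rS h *m Y.

Lemma twisted_Schur Y : twisted_hom Y -> Y != 0 -> Y \in unitmx.
Proof.
move=> homY nzY; have kerY := sub_kermxP (submx_refl (kermx Y)).
have modK : mxmodule rS (kermx Y).
  apply/mxmoduleP => h Gh; apply/sub_kermxP.
  by have [g Gg eY] := homY h Gh; rewrite -mulmxA -eY mulmxA kerY mul0mx.
have [K0|nzK] := eqVneq (kermx Y) 0.
  by rewrite -row_free_unit -kermx_eq0 K0.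
case/mx_irrP: irrS => _ /(_ _ modK nzK) /row_fullP[B defB].
by case/negP: nzY; rewrite -[Y]mul1mx -defB -mulmxA kerY mulmx0.
Qed.

End TwistedSchur.

Lemma centgmx_odd_scalar (R : rcfType) gT (G : {group gT}) d
    (rS : mx_representation R G d) (Y : 'M[R]_d) :
  mx_irreducible rS -> odd d -> centgmx rS Y -> exists c, Y = c%:M.
Proof.
move=> irrS odd_d cYS; have [a /eigenvalueP[v vY nz_v]] := odd_eigenvalue Y odd_d.
exists a; apply/eqP; rewrite -subr_eq0; apply: contraTT nz_v => nzYa.
have cYaS : centgmx rS (Y - a%:M).
  by apply/centgmxP => x Gx; rewrite mulmxBl mulmxBr (centgmxP cYS) // scalar_mxC.
have uYa := mx_Schur irrS cYaS nzYa.
by rewrite negbK -[v](mulmxK uYa) mulmxBr vY mul_mx_scalar subrr mul0mx.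
Qed.

Lemma scalar_tensor_eq1 (F : fieldType) k d (A : 'M[F]_k) (P : 'M[F]_d) :
    (0 < k)%N -> (0 < d)%N -> (forall i l, A i l *: P = (i == l)%:R *: 1%:M) ->
  exists2 c, A = c%:M & c *: P = 1%:M.
Proof.
move=> k_gt0 d_gt0 AP1; pose c := A (Ordinal k_gt0) (Ordinal k_gt0).
have cP1 : c *: P = 1%:M by rewrite AP1 eqxx scale1r.
have nzP : P != 0.
  apply: contraTneq d_gt0 => P0.
  by have := mxrank1 F d; rewrite -cP1 P0 scaler0 mxrank0 => <-.
exists c => //; apply/matrixP => i l; rewrite mxE -mulr_natr.
apply/eqP; rewrite -subr_eq0.
have : (A i l - c * (i == l)%:R) *: P == 0.
  by rewrite scalerBl AP1 mulrC -scalerA cP1 subrr.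
by rewrite scalemx_eq0 (negPf nzP) orbF.
Qed.

Lemma mxpow_eigen (R : realType) m (A : 'M[R]_m) (w : 'rV[R]_m) a t :
  w *m A = a *: w -> w *m mxpow A t = a ^+ t *: w.
Proof.
move=> wA; elim: t => [|t IHt]; first by rewrite /= mulmx1 expr0 scale1r.
by rewrite /= mulmxA wA -scalemxAl IHt scalerA exprS.
Qed.

Section TensorDecomposition.
Variables (R : realType) (gT : finGroupType) (G : {group gT}) (n d k : nat).
Variables (rG : mx_representation R G n) (rS : mx_representation R G d).
Variable E_ : 'I_k -> 'M[R]_(d, n).
Hypothesis E_hom : forall i x, x \in G -> E_ i *m rG x = rS x *m E_ i.
Hypothesis E_span : forall u : 'M[R]_(d, n),
  exists X : 'I_k -> 'M[R]_d, u = \sum_i X i *m E_ i.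
Hypothesis E_free : forall p (X : 'I_k -> 'M[R]_(p, d)),
  \sum_i X i *m E_ i = 0 -> forall i, X i = 0.

(* [tensor_mx w v] is [w (x) v] under the identification of V with R^k (x) S. *)
Definition tensor_mx p (w : 'rV[R]_k) (v : 'M[R]_(p, d)) : 'M[R]_(p, n) :=
  \sum_i w 0 i *: (v *m E_ i).

Lemma E_sum_inj p (X Y : 'I_k -> 'M[R]_(p, d)) :
  \sum_i X i *m E_ i = \sum_i Y i *m E_ i -> forall i, X i = Y i.
Proof.
move=> eXY i; apply/eqP; rewrite -subr_eq0; apply/eqP; move: i; apply: E_free.
rewrite (eq_bigr (fun i => X i *m E_ i - Y i *m E_ i)) ?sumrB ?eXY ?subrr //.
by move=> i _; rewrite mulmxBl.
Qed.

Lemma tensor_coef p w w' (v v' : 'M_(p, d)) :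
  tensor_mx w v = tensor_mx w' v' -> forall i, w 0 i *: v = w' 0 i *: v'.
Proof.
have tensorE (u : 'rV_k) (x : 'M_(p, d)) : tensor_mx u x = \sum_i (u 0 i *: x) *m E_ i.
  by apply: eq_bigr => i _; rewrite scalemxAl.
by rewrite !tensorE => /E_sum_inj.
Qed.

Lemma tensor_mx_eq0 p w (v : 'M_(p, d)) : tensor_mx w v = 0 -> w = 0 \/ v = 0.
Proof.
move=> wv0; have {}wv0 i : w 0 i *: v = 0.
  rewrite (tensor_coef (w' := 0) (v' := v) _ i) ?mxE ?scale0r // wv0.
  by rewrite /tensor_mx big1 // => l _; rewrite mxE scale0r.
have [->|nz_v] := eqVneq v 0; [by right | left].
apply/matrixP => a i; rewrite ord1 mxE; apply/eqP.
by have /eqP := wv0 i; rewrite scalemx_eq0 (negPf nz_v) orbF.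
Qed.

Lemma tensor_delta p i (v : 'M_(p, d)) : tensor_mx (delta_mx 0 i) v = v *m E_ i.
Proof.
rewrite /tensor_mx (bigD1 i) //= big1 ?addr0 => [|l /negPf nil]; rewrite mxE.
  by rewrite !eqxx scale1r.
by rewrite nil andbF scale0r.
Qed.

Lemma tensorZ p a w (v : 'M_(p, d)) : tensor_mx (a *: w) v = tensor_mx w (a *: v).
Proof. by apply: eq_bigr => i _; rewrite mxE -scalemxAl scalerA mulrC. Qed.

Lemma mulmx_tensor p q (u : 'M_(q, p)) w (v : 'M_(p, d)) :
  u *m tensor_mx w v = tensor_mx w (u *m v).
Proof.
by rewrite /tensor_mx mulmx_sumr; apply: eq_bigr => i _; rewrite -scalemxAr mulmxA.
Qed.

Lemma tensor_repr p w (v : 'M_(p, d)) x :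
  x \in G -> tensor_mx w v *m rG x = tensor_mx w (v *m rS x).
Proof.
move=> Gx; rewrite /tensor_mx mulmx_suml; apply: eq_bigr => i _.
by rewrite -scalemxAl -mulmxA E_hom // mulmxA.
Qed.

Section TensorEndomorphism.
Variables (N : 'M[R]_n) (B : 'M[R]_k) (M : 'M[R]_d).
Hypothesis E_N : forall i, E_ i *m N = tensor_mx (row i B) M.

Lemma tensor_mulmx p w (v : 'M_(p, d)) :
  tensor_mx w v *m N = tensor_mx (w *m B) (v *m M).
Proof.
rewrite /tensor_mx mulmx_suml.
rewrite (eq_bigr (fun i => \sum_l (w 0 i * B i l) *: (v *m M *m E_ l))).
  rewrite exchange_big; apply: eq_bigr => l _.
  by rewrite mxE scaler_suml.
move=> i _; rewrite -scalemxAl -mulmxA E_N mulmx_tensor scaler_sumr.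
by apply: eq_bigr => l _; rewrite mxE scalerA.
Qed.

Lemma tensor_mxpow p w (v : 'M_(p, d)) t :
  tensor_mx w v *m mxpow N t = tensor_mx (w *m mxpow B t) (v *m mxpow M t).
Proof.
elim: t w v => [|t IHt] w v; first by rewrite /= !mulmx1.
by rewrite /= mulmxA tensor_mulmx IHt !mulmxA.
Qed.

End TensorEndomorphism.

Lemma E_neq0 i : (0 < d)%N -> E_ i != 0.
Proof.
move=> d_gt0; apply/eqP => /(congr1 (mulmx 1%:M)); rewrite mulmx0 -tensor_delta.
case/tensor_mx_eq0 => [/matrixP/(_ 0 i)/eqP | /eqP].
  by rewrite !mxE !eqxx oner_eq0.
by rewrite -mxrank_eq0 mxrank1 gtn_eqF.
Qed.

Lemma coef_intertwine N (X : 'I_k -> 'M[R]_d) i g h :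
    g \in G -> h \in G -> N *m rG g = rG h *m N ->
    E_ i *m N = \sum_l X l *m E_ l ->
  forall l, X l *m rS g = rS h *m X l.
Proof.
move=> Gg Gh eN eX; apply: E_sum_inj.
rewrite (eq_bigr (fun l => X l *m E_ l *m rG g)); last first.
  by move=> l _; rewrite -!mulmxA E_hom.
rewrite -mulmx_suml -eX -mulmxA eN mulmxA E_hom // -mulmxA eX mulmx_sumr.
by apply: eq_bigr => l _; rewrite mulmxA.
Qed.

Hypothesis irrS : mx_irreducible rS.
Hypothesis odd_d : odd d.

Lemma normalizer_tensor_factor N : (0 < k)%N -> N \in unitmx ->
    (forall h, h \in G -> exists2 g, g \in G & N *m rG g = rG h *m N) ->
  exists B M, (forall g h, g \in G -> h \in G -> N *m rG g = rG h *m N ->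
                 M *m rS g = rS h *m M)
            /\ (forall i, E_ i *m N = tensor_mx (row i B) M).
Proof.
move=> k_gt0 uN twN; pose i0 := Ordinal k_gt0.
have [X eX] := fin_all_exists (fun i => E_span (E_ i *m N)).
have XJ g h i l : g \in G -> h \in G -> N *m rG g = rG h *m N ->
    X i l *m rS g = rS h *m X i l.
  by move=> Gg Gh eN; apply: coef_intertwine Gg Gh eN (eX i) l.
have [l0 nzX] : exists l, X i0 l != 0.
  apply/existsP; apply: contraR (E_neq0 i0 (odd_gt0 odd_d)) => /existsPn X0.
  rewrite -[E_ i0](mulmxK uN) eX big1 ?mul0mx // => l _.
  by rewrite (eqP (negbNE (X0 l))) mul0mx.
pose M := X i0 l0.
have twM : twisted_hom rS M.
  by move=> h Gh; have [g Gg eN] := twN h Gh; exists g => //; apply: XJ.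
have uM := twisted_Schur irrS twM nzX.
have [b Xb] : exists b : 'I_k * 'I_k -> R, forall il, X il.1 il.2 = b il *: M.
  apply: (fin_all_exists (P := fun il c => X il.1 il.2 = c *: M)) => -[i l] /=.
  have [|c Xc] := centgmx_odd_scalar (Y := X i l *m invmx M) irrS odd_d.
    apply/centgmxP => h Gh; have [g Gg eN] := twN h Gh.
    by rewrite -mulmxA (mulmx_conjV uM (XJ _ _ _ _ Gg Gh eN)) mulmxA (XJ g h) // mulmxA.
  by exists c; rewrite -mul_scalar_mx -Xc mulmxKV.
exists (\matrix_(i, l) b (i, l)), M; split=> [g h Gg Gh eN | i]; first exact: XJ.
rewrite eX; apply: eq_bigr => l _.
by rewrite !mxE (Xb (i, l)) scalemxAl.
Qed.

Hypothesis odd_k : odd k.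
Hypothesis E1S : E1_pair rS.

Lemma E1_pair_tensor : E1_pair rG.
Proof.
move=> N [uN [j j_gt0 Nj1]] [norN1 norN2].
have twN h : h \in G -> exists2 g, g \in G & N *m rG g = rG h *m N.
  by move=> /norN2[g Gg eN]; exists g => //; rewrite -eN mulmxKV.
have [B [M [MJ E_N]]] := normalizer_tensor_factor (odd_gt0 odd_k) uN twN.
have [c Bj cMj] : exists2 c, mxpow B j = c%:M & c *: mxpow M j = 1%:M.
  apply: scalar_tensor_eq1 (odd_gt0 odd_k) (odd_gt0 odd_d) _ => i l.
  have := tensor_mxpow E_N (delta_mx 0 i) 1%:M j.
  rewrite Nj1 mulmx1 mul1mx -rowE => /esym/tensor_coef/(_ l).
  by rewrite !mxE eqxx eq_sym.
have [lam /eigenvalueP[w wB nz_w]] := odd_eigenvalue B odd_k.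
have lamj : lam ^+ j = c.
  apply/eqP; move: (mxpow_eigen j wB); rewrite Bj mul_mx_scalar => /eqP.
  by rewrite -subr_eq0 -scalerBl scalemx_eq0 (negPf nz_w) orbF subr_eq0 eq_sym.
pose M' := lam *: M.
have M'j1 : mxpow M' j = 1%:M by rewrite mxpowZ lamj.
have M'J g h : g \in G -> h \in G -> N *m rG g *m invmx N = rG h ->
    M' *m rS g *m invmx M' = rS h.
  move=> Gg Gh eN; have uM' := mxpow_unit j_gt0 M'j1.
  have eM' : M' *m rS g = rS h *m M'.
    by rewrite -scalemxAl (MJ g h) ?scalemxAr // -eN mulmxKV.
  by rewrite eM' mulmxK.
have [g Gg /eigenvalueP[v vgM' nz_v]] : E1_triple rS M'.
  apply: E1S; first by split; [exact: mxpow_unit j_gt0 M'j1 | exists j].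
  split=> [g Gg | h Gh].
    by have [h Gh eN] := norN1 g Gg; exists h => //; apply: M'J.
  by have [g Gg eN] := norN2 h Gh; exists g => //; apply: M'J.
exists g => //; apply/eigenvalueP; exists (tensor_mx w v).
  rewrite mulmxA tensor_repr // (tensor_mulmx E_N) wB tensorZ.
  rewrite scale1r in vgM'; rewrite scale1r; congr tensor_mx.
  by rewrite -[RHS]vgM' /M' -!scalemxAr mulmxA.
by apply/eqP => /tensor_mx_eq0[w0|v0]; [move: nz_w | move: nz_v]; rewrite ?w0 ?v0 eqxx.
Qed.

End TensorDecomposition.

Section DirectSumEmbeddings.
Variables (F : fieldType) (k n d : nat).
Variables (W : 'I_k -> 'M[F]_n) (E_ : 'I_k -> 'M[F]_(d, n)).
Hypothesis E_W : forall i, (E_ i == W i)%MS.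
Hypothesis E_free : forall i, row_free (E_ i).
Hypothesis dxW : mxdirect (\sum_i W i).
Hypothesis sumW : (\sum_i W i == 1%:M)%MS.

Lemma direct_sum_span p (u : 'M[F]_(p, n)) :
  exists X : 'I_k -> 'M[F]_(p, d), u = \sum_i X i *m E_ i.
Proof.
apply/sub_sums_genmxP; apply: submx_trans (submx1 u) _.
case/andP: sumW => _ /submx_trans; apply.
by apply: sumsmxS => i _; rewrite genmxE; case/andP: (E_W i).
Qed.

Lemma direct_sum_free p (X : 'I_k -> 'M[F]_(p, d)) :
  \sum_i X i *m E_ i = 0 -> forall i, X i = 0.
Proof.
move=> X0 i; have [A_ _ _ uniqA] := sub_dsumsmx dxW (sub0mx p (\sum_i W i)%MS).
have XEW j : (X j *m E_ j <= W j)%MS.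
  by apply: submx_trans (submxMl _ _) _; case/andP: (E_W j).
have := uniqA (fun j => X j *m E_ j) (fun j _ => XEW j) (esym X0) i isT.
have := uniqA (fun _ => 0) (fun j _ => sub0mx _ _) (esym (big1_eq _ _)) i isT.
move=> /= <- XE0; apply: (row_free_inj (E_free i)); by rewrite XE0 mul0mx.
Qed.

Lemma direct_sum_dim : n = (k * d)%N.
Proof.
rewrite -[n](mxrank1 F) -(eqmx_rank sumW) (mxdirectP dxW) /=.
rewrite (eq_bigr (fun _ => d)) ?sum_nat_const ?card_ord // => i _.
by rewrite -(eqmx_rank (E_W i)) (eqP (E_free i)).
Qed.

End DirectSumEmbeddings.

Lemma mx_iso_submod_embedding (F : fieldType) gT (G : {group gT}) n
    (rG : mx_representation F G n) (S W : 'M[F]_n) (modS : mxmodule rG S) :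
  mx_iso rG S W ->
  exists E : 'M[F]_(\rank S, n),
    [/\ forall x, x \in G -> E *m rG x = submod_repr modS x *m E,
        (E == W)%MS & row_free E].
Proof.
case=> f uf homf defW; exists (val_submod 1%:M *m f); split.
- move=> x Gx; rewrite -(hom_mxP (submx_trans (val_submodP _) homf)) //.
  by rewrite -val_submodJ // val_submodE mul1mx; apply: esym (mulmxA _ _ _).
- by apply/eqmxP; apply: eqmx_trans (eqmxMr f (val_submod1 S)) defW.
- by rewrite /row_free mxrankMfree ?row_free_unit // (val_submod1 S).1.
Qed.

Theorem lemma2 (R : realType) (n : nat) (gT : finGroupType) (G : {group gT})
    (rG : mx_representation R G n) (S : 'M[R]_n) (modS : mxmodule rG S) :
  odd n ->
  mx_faithful rG ->
  mxsimple rG S ->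
  homogeneous_mx rG S ->
  E1_pair (submod_repr modS) ->
  E1_pair rG.
Proof.
move=> odd_n _ simS [k [W [isoW dxW sumW]]] E1S.
have [E_ /all_and3[E_hom E_W E_free]] :=
  fin_all_exists (fun i => mx_iso_submod_embedding modS (isoW i)).
move: odd_n; rewrite [in odd n](direct_sum_dim E_W E_free dxW sumW) oddM.
case/andP=> odd_k odd_d.
apply: (E1_pair_tensor (rS := submod_repr modS) (E_ := E_)) => //.
- by move=> u; exact: (direct_sum_span E_W sumW u).
- by move=> p X; exact: (direct_sum_free E_W E_free dxW (X := X)).
- exact/submod_mx_irr.
Qed.
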